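(* Let $k$ be an étale cubic algebra over $\mathbb{Q}$ and let $\mathcal{O}\subset\mathcal{O}_k$ be a cubic ring such that the index $f=(\mathcal{O}_k:\mathcal{O})$ is square free. Then there exists a normalized basis $\{1,\omega,\theta\}$ of $\mathcal{O}_k$ with $\omega,\theta\in k^\times$ (invertible elements of $k$) such that $\mathcal{O}=[1,f\omega,\theta]$ and $[f,f\omega,\theta]$ is the conductor of $\mathcal{O}$.
   Context: An étale cubic algebra is a direct sum of number fields of total degree $3$ over $\mathbb{Q}$; $\mathcal{O}_k$ is its maximal order. A $\mathbb{Z}$-basis $\{1,\omega,\theta\}$ of a cubic ring is normalized if $\omega\theta\in\mathbb{Z}$. $[\beta_1,\beta_2,\beta_3]$ denotes the $\mathbb{Z}$-span. The conductor of $\mathcal{O}$ is the largest $\mathcal{O}_k$-ideal contained in $\mathcal{O}$. *)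

From mathcomp Require Import all_boot all_order all_algebra all_field.
Set Implicit Arguments. Unset Strict Implicit. Unset Printing Implicit Defensive.
Import Order.TTheory GRing.Theory Num.Theory.
Local Open Scope ring_scope.

Section CubicDefs.
Variable k : falgType rat.

Definition etale_cubic : Prop :=
  [/\ (forall x y : k, x * y = y * x),
      \dim (fullv : {vspace k}) = 3%N
    & (forall (x : k) (n : nat), x ^+ n = 0 -> x = 0)].

Definition kset := k -> Prop.

Definition subset_k (A B : kset) : Prop := forall x, A x -> B x.
Definition eq_kset (A B : kset) : Prop := forall x, A x <-> B x.

Definition zspan3 (b1 b2 b3 : k) : kset :=
  fun x => exists a1 a2 a3 : int, x = a1%:~R * b1 + a2%:~R * b2 + a3%:~R * b3.

Definition zfree3 (b1 b2 b3 : k) : Prop :=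
  forall a1 a2 a3 : int, a1%:~R * b1 + a2%:~R * b2 + a3%:~R * b3 = 0 ->
    [/\ a1 = 0, a2 = 0 & a3 = 0].

Definition zbasis3 (A : kset) (b1 b2 b3 : k) : Prop :=
  eq_kset A (zspan3 b1 b2 b3) /\ zfree3 b1 b2 b3.

Definition maximal_order : kset :=
  fun x => exists p : {poly int}, p \is monic /\
             (map_poly (fun z : int => z%:~R : k) p).[x] = 0.

Definition cubic_ring (O : kset) : Prop :=
  [/\ O 1, (forall x y, O x -> O y -> O (x - y)),
      (forall x y, O x -> O y -> O (x * y))
    & exists b1 b2 b3, zbasis3 O b1 b2 b3].

Definition index_is (N M : kset) (n : nat) : Prop :=
  exists r : 'I_n -> k, (forall i, N (r i)) /\
    (forall x, N x -> exists! i, M (x - r i)).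

Definition ideal_of (R I : kset) : Prop :=
  [/\ subset_k I R, I 0, (forall x y, I x -> I y -> I (x - y))
    & (forall r x, R r -> I x -> I (r * x))].

Definition is_conductor (R O C : kset) : Prop :=
  [/\ ideal_of R C, subset_k C O
    & forall I, ideal_of R I -> subset_k I O -> subset_k I C].

Definition normalized_basis (A : kset) (w t : k) : Prop :=
  zbasis3 A 1 w t /\ exists n : int, w * t = n%:~R.

End CubicDefs.

Definition squarefree (n : nat) : Prop :=
  (0 < n)%N /\ forall p, prime p -> ~~ (p * p %| n)%N.

(* Since
   f Ok lies in O, the group Ok/O embeds into O/fO = (Z/f)^3; being abelian of
   squarefree order it is cyclic, generated by some w0 with j w0 in O only for
   f | j.  As 1 is primitive in O, O = [1, u, v]; writing f w0 = c0 + g u' in a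
   basis [1, u', v'] of O, the content g is prime to f (a common factor e would
   give (f/e) w0 in O), and a Bezout combination a of w0 and u' satisfies
   Ok = [1, a, v'] and O = [1, f a, v'].  Translating a and v' by integers makes
   the basis normalized.  For a normalized basis, w^2 = e0 + e1 w + e2 t and
   t^2 = g0 + g1 w + g2 t force w t = e2 g1, and (since k is reduced) one or two
   unimodular changes of basis make e2 g1 nonzero, so w and t are units.
   Finally t^2 in O gives f | g1, which makes [f, f w, t] an Ok-ideal, and any
   Ok-ideal I inside O lies in it because w I also lies in O. *)

From HB Require Import structures.
From mathcomp Require Import all_boot all_order all_algebra all_field all_fingroup all_solvable.
From mathcomp Require Import ring zify.
Set Implicit Arguments. Unset Strict Implicit. Unset Printing Implicit Defensive.
Import GRing.Theory Num.Theory FinRing.Theory.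
Local Open Scope ring_scope.

Lemma int_gcd_cofactors (u1 u2 : int) : exists g v1 v2 x1 x2 : int,
  [/\ u1 = g * v1, u2 = g * v2 & x1 * v1 + x2 * v2 = 1].
Proof.
have [/eqP|g_neq0] := eqVneq (gcdz u1 u2) 0.
  by rewrite gcdz_eq0 => /andP[/eqP -> /eqP ->]; exists 0, 1, 0, 1, 0; rewrite !mulr0.
have [x1 [x2 bezout]] := Bezoutz u1 u2.
have e1 := divzK (dvdz_gcdl u1 u2); have e2 := divzK (dvdz_gcdr u1 u2).
move: g_neq0 bezout e1 e2; set g := gcdz u1 u2.
set v1 := (u1 %/ g)%Z; set v2 := (u2 %/ g)%Z => g_neq0 bezout e1 e2.
exists g, v1, v2, x1, x2; rewrite ![g * _]mulrC e1 e2; split=> //.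
by apply: (mulIf g_neq0); rewrite mul1r -[in RHS]bezout -e1 -e2; ring.
Qed.

Lemma exists_nonroot_cubic (a b c d : int) : ~ [/\ a = 0, b = 0, c = 0 & d = 0] ->
  exists2 s : int, s != 0 & a + s * b + s * s * c + s * s * s * d != 0.
Proof.
pose P s := a + s * b + s * s * c + s * s * s * d.
move=> nz; have [P1|] := eqVneq (P 1) 0; last by exists 1.
have [P2|] := eqVneq (P 2) 0; last by exists 2.
have [P3|] := eqVneq (P 3) 0; last by exists 3.
have [P4|] := eqVneq (P 4) 0; last by exists 4.
by rewrite /P in P1 P2 P3 P4; exfalso; apply: nz; split; lia.
Qed.

Lemma rat_integral_int (q : rat) : integralOver (intr : int -> rat) q -> q \is a Num.int.
Proof.
case=> p mon_p root_p; rewrite -Cint_rat Cint_rat_Aint ?Crat_rat //.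
apply: (@root_monic_Aint (map_poly intr p)); last 1 first.
- by apply/polyOverP=> i; rewrite coef_map rpred_int.
- rewrite -(fmorph_root (ratr : {rmorphism rat -> algC})) -map_poly_comp in root_p.
  by rewrite (eq_map_poly (rmorph_int _)) in root_p.
exact: monic_map.
Qed.

Lemma abelian_squarefree_cyclic (gT : finGroupType) (G : {group gT}) :
  abelian G -> (forall p, prime p -> ~~ (p * p %| #|G|)%N) -> cyclic G.
Proof.
move=> abG sqf; apply: nil_Zgroup_cyclic; last exact: abelian_nil.
apply/forall_inP=> P /SylowP[p p_pr sylP]; apply: (dvdn_prime_cyclic p_pr).
have [[|[|e]] cardP] := p_natP (pHall_pgroup sylP); rewrite cardP ?dvd1n ?dvdnn //.
case/negP: (sqf p p_pr); apply: dvdn_trans (cardSg (pHall_sub sylP)).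
by rewrite cardP !expnS mulnA dvdn_mulr.
Qed.

Section IntegerLattices.
Variable R : comNzRingType.

Definition zcomb (u v w : R) (a b c : int) : R := a%:~R * u + b%:~R * v + c%:~R * w.

Definition zspan (u v w x : R) : Prop := exists a b c : int, x = zcomb u v w a b c.

Definition zfree (u v w : R) : Prop :=
  forall a b c : int, zcomb u v w a b c = 0 -> [/\ a = 0, b = 0 & c = 0].

Definition zbasis (A : R -> Prop) (u v w : R) : Prop :=
  (forall x, A x <-> zspan u v w x) /\ zfree u v w.

Lemma zcombB u v w a b c a' b' c' :
  zcomb u v w a b c - zcomb u v w a' b' c' = zcomb u v w (a - a') (b - b') (c - c').
Proof. rewrite /zcomb; ring. Qed.

Lemma zcomb_inj u v w a b c a' b' c' : zfree u v w ->
  zcomb u v w a b c = zcomb u v w a' b' c' -> [/\ a = a', b = b' & c = c'].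
Proof.
move=> free_uvw eq_comb; have [] := free_uvw (a - a') (b - b') (c - c').
  by rewrite -zcombB eq_comb subrr.
by move=> /subr0_eq -> /subr0_eq -> /subr0_eq ->.
Qed.

Lemma zbasis_mem A u v w : zbasis A u v w -> [/\ A u, A v & A w].
Proof.
by case=> span_A _; split; apply/span_A;
  [exists 1, 0, 0 | exists 0, 1, 0 | exists 0, 0, 1]; rewrite /zcomb; ring.
Qed.

Lemma zbasis_unimodular A u v w u' v' (p q r s : int) : p * s - q * r = 1 ->
  u' = p%:~R * u + q%:~R * v -> v' = r%:~R * u + s%:~R * v ->
  zbasis A u v w -> zbasis A u' v' w.
Proof.
move=> det1 -> -> [span_A free_uvw]; split=> [x|a b c].
  rewrite span_A; split=> -[a [b [c ->]]].
    exists (a * s - b * r), (b * p - a * q), c.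
    by rewrite -[a in LHS]mul1r -[b in LHS]mul1r -det1 /zcomb; ring.
  by exists (a * p + b * r), (a * q + b * s), c; rewrite /zcomb; ring.
move=> comb0; have [] := free_uvw (a * p + b * r) (a * q + b * s) c.
  by rewrite -comb0 /zcomb; ring.
move=> e1 e2 ->.
have ea : a = s * (a * p + b * r) - r * (a * q + b * s) by rewrite -[LHS]mulr1 -det1; ring.
have eb : b = p * (a * q + b * s) - q * (a * p + b * r) by rewrite -[LHS]mulr1 -det1; ring.
by split=> //; [rewrite ea | rewrite eb]; rewrite e1 e2 !mulr0 subr0.
Qed.

Lemma zbasis_swap12 A u v w : zbasis A u v w -> zbasis A v u w.
Proof.
case=> span_A free_uvw; split=> [x|a b c comb0].
  by rewrite span_A; split=> -[a [b [c ->]]]; exists b, a, c; rewrite /zcomb; ring.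
by have [|-> -> ->] // := free_uvw b a c; rewrite -comb0 /zcomb; ring.
Qed.

Lemma zbasis_swap23 A u v w : zbasis A u v w -> zbasis A u w v.
Proof.
case=> span_A free_uvw; split=> [x|a b c comb0].
  by rewrite span_A; split=> -[a [b [c ->]]]; exists a, c, b; rewrite /zcomb; ring.
by have [|-> -> ->] // := free_uvw a c b; rewrite -comb0 /zcomb; ring.
Qed.

Lemma zbasis_shear A u v w v' (m : int) :
  v' = v + m%:~R * u -> zbasis A u v w -> zbasis A u v' w.
Proof.
move=> ->; apply: (zbasis_unimodular (p := 1) (q := 0) (r := m) (s := 1));
  rewrite ?mul0r ?subr0 ?mulr1 // /zcomb; ring.
Qed.

Lemma zbasis1_affine A w t w' t' (p q r s a b : int) : p * s - q * r = 1 ->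
  w' = zcomb 1 w t a p q -> t' = zcomb 1 w t b r s ->
  zbasis A 1 w t -> zbasis A 1 w' t'.
Proof.
move=> det1 -> -> /zbasis_swap12 /zbasis_swap23.
move=> /(zbasis_unimodular det1 erefl erefl) /zbasis_swap23 /zbasis_swap12.
move=> /(zbasis_shear (m := a) erefl) /zbasis_swap23 /(zbasis_shear (m := b) erefl).
by move=> /zbasis_swap23; congr zbasis; rewrite /zcomb; ring.
Qed.

Lemma zbasis_index (A B : R -> Prop) (u v w : R) (n : int) : n != 0 ->
  (forall x, B x <-> exists j : int, A (x - j%:~R * v)) ->
  zbasis A u (n%:~R * v) w -> zbasis B u v w.
Proof.
move=> n_neq0 BE [span_A free_A]; split=> [x|a b c comb0].
  rewrite BE; split=> [[j /span_A[a [b [c Ex]]]] | [a [b [c ->]]]].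
    by exists a, (b * n + j), c; rewrite -[x](subrK (j%:~R * v)) Ex /zcomb; ring.
  by exists b; apply/span_A; exists a, 0, c; rewrite /zcomb; ring.
have [|/eqP an0 -> /eqP cn0] := free_A (a * n) b (c * n).
  by rewrite -[RHS](mulr0 n%:~R) -comb0 /zcomb; ring.
by move: an0 cn0; rewrite !mulf_eq0 (negPf n_neq0) !orbF => /eqP -> /eqP ->.
Qed.

Lemma zbasis_content2 (A : R -> Prop) (u v w : R) (b c : int) : zbasis A u v w ->
  exists (g : int) v' w', b%:~R * v + c%:~R * w = g%:~R * v' /\ zbasis A u v' w'.
Proof.
move=> /zbasis_swap12 /zbasis_swap23 B.
have [g [b' [c' [x1 [x2 [-> -> bezout]]]]]] := int_gcd_cofactors b c.
exists g, (b'%:~R * v + c'%:~R * w), ((- x2)%:~R * v + x1%:~R * w); split.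
  by ring.
apply/zbasis_swap12/zbasis_swap23/(zbasis_unimodular _ erefl erefl B).
by rewrite -bezout; ring.
Qed.

Lemma zbasis_content (A : R -> Prop) (u v w : R) (a b c : int) : zbasis A u v w ->
  exists (d : int) y v' w', zcomb u v w a b c = d%:~R * y /\ zbasis A y v' w'.
Proof.
move=> /(zbasis_content2 b c) [g [v' [w' [Evw /zbasis_swap23 /zbasis_swap12]]]].
move=> /(zbasis_content2 a g) [d [y [z [Ey /zbasis_swap12 B]]]].
by exists d, y, w', z; rewrite /zcomb -addrA Evw.
Qed.

Section NormalizedMultiplication.
Variables (w t : R) (e0 e1 e2 g0 g1 g2 n : int).
Hypotheses (wwE : w * w = zcomb 1 w t e0 e1 e2) (ttE : t * t = zcomb 1 w t g0 g1 g2).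
Hypothesis wtE : w * t = n%:~R.

Lemma normalized_zcombM x0 x1 x2 y0 y1 y2 :
  zcomb 1 w t x0 x1 x2 * zcomb 1 w t y0 y1 y2 =
  zcomb 1 w t (x0 * y0 + x1 * y1 * e0 + (x1 * y2 + x2 * y1) * n + x2 * y2 * g0)
              (x0 * y1 + x1 * y0 + x1 * y1 * e1 + x2 * y2 * g1)
              (x0 * y2 + x2 * y0 + x1 * y1 * e2 + x2 * y2 * g2).
Proof.
have -> : zcomb 1 w t x0 x1 x2 * zcomb 1 w t y0 y1 y2 =
    x0%:~R * y0%:~R + (x0 * y1 + x1 * y0)%:~R * w + (x0 * y2 + x2 * y0)%:~R * t
    + (x1 * y1)%:~R * (w * w) + (x2 * y2)%:~R * (t * t) + (x1 * y2 + x2 * y1)%:~R * (w * t).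
  by rewrite /zcomb; ring.
by rewrite wwE ttE wtE /zcomb; ring.
Qed.

(* Compute w * (w * t) and (w * t) * t in two ways. *)
Lemma normalized_mul_table : zfree 1 w t ->
  [/\ n = e2 * g1, e0 = - (e2 * g2) & g0 = - (g1 * e1)].
Proof.
move=> free_wt.
have tE : zcomb 1 w t 0 0 1 = t by rewrite /zcomb; ring.
have wE : zcomb 1 w t 0 1 0 = w by rewrite /zcomb; ring.
have [_ n_eq e0_eq] : [/\ 0 = e1 * n + e2 * g0, n = e2 * g1 & 0 = e0 + e2 * g2].
  apply: zcomb_inj free_wt _.
  transitivity (zcomb 1 w t e0 e1 e2 * zcomb 1 w t 0 0 1).
    by rewrite tE -wwE -mulrA wtE /zcomb; ring.
  by rewrite normalized_zcombM; congr zcomb; ring.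
have [_ g0_eq _] : [/\ 0 = g1 * e0 + g2 * n, 0 = g0 + g1 * e1 & n = g1 * e2].
  apply: zcomb_inj free_wt _.
  transitivity (zcomb 1 w t 0 1 0 * zcomb 1 w t g0 g1 g2).
    by rewrite wE -ttE mulrA wtE /zcomb; ring.
  by rewrite normalized_zcombM; congr zcomb; ring.
by split=> //; lia.
Qed.

End NormalizedMultiplication.

End IntegerLattices.

Section ZpRows.
Variable f : nat.
Hypothesis f_gt1 : (1 < f)%N.

Lemma intr_Zp_eq0 (z : int) : (z%:~R : 'Z_f) = 0 <-> (f%:Z %| z)%Z.
Proof.
have natr_eq0 (n : nat) : (n%:R : 'Z_f) = 0 <-> (f %| n)%N.
  rewrite /dvdn -(val_Zp_nat f_gt1); split=> [-> // | /eqP n0].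
  exact: val_inj.
rewrite dvdzE; case: z => n; first by rewrite -pmulrn natr_eq0.
rewrite NegzE mulrNz -pmulrn abszN /= -natr_eq0.
by split=> [/eqP | ->]; rewrite ?oppr0 ?oppr_eq0 => //= /eqP.
Qed.

Definition zmod_row3 (a b c : int) : 'rV['Z_f]_3 :=
  \row_(l < 3) (nth 0 [:: a; b; c] l)%:~R.

Lemma zmod_row30 : zmod_row3 0 0 0 = 0.
Proof. by apply/rowP=> -[[|[|[|//]]] ?]; rewrite !mxE. Qed.

Lemma zmod_row3D a b c a' b' c' :
  zmod_row3 a b c + zmod_row3 a' b' c' = zmod_row3 (a + a') (b + b') (c + c').
Proof. by apply/rowP=> -[[|[|[|//]]] ?]; rewrite !mxE /= intrD. Qed.

Lemma zmod_row3Mn a b c (m : nat) :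
  zmod_row3 a b c *+ m = zmod_row3 (a * m%:Z) (b * m%:Z) (c * m%:Z).
Proof.
by apply/rowP=> -[[|[|[|//]]] ?]; rewrite mulmxnE !mxE /= intrM mulrzr -pmulrn.
Qed.

Lemma zmod_row3_eq a b c a' b' c' :
  zmod_row3 a b c = zmod_row3 a' b' c' <->
  [/\ (f%:Z %| a - a')%Z, (f%:Z %| b - b')%Z & (f%:Z %| c - c')%Z].
Proof.
split=> [/rowP eq_row | [/intr_Zp_eq0 ea /intr_Zp_eq0 eb /intr_Zp_eq0 ec]].
  split; apply/intr_Zp_eq0; rewrite intrB; apply/eqP; rewrite subr_eq0; apply/eqP;
    [move: (eq_row 0) | move: (eq_row 1) | move: (eq_row 2)]; by rewrite !mxE.
apply/rowP=> -[[|[|[|//]]] ?]; rewrite !mxE /=; apply/eqP; rewrite -subr_eq0 -intrB;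
  exact/eqP.
Qed.

End ZpRows.

Section SubringPredicates.
Variable R : nzRingType.

Definition subring_pred (S : R -> Prop) : Prop :=
  [/\ S 1, (forall x y, S x -> S y -> S (x - y)) & (forall x y, S x -> S y -> S (x * y))].

Definition ideal_in (S I : R -> Prop) : Prop :=
  [/\ forall x, I x -> S x, I 0, (forall x y, I x -> I y -> I (x - y))
    & forall r x, S r -> I x -> I (r * x)].

Definition conductor_in (S O C : R -> Prop) : Prop :=
  [/\ ideal_in S C, (forall x, C x -> O x)
    & forall I, ideal_in S I -> (forall x, I x -> O x) -> forall x, I x -> C x].

Variable S : R -> Prop.
Hypothesis S_subring : subring_pred S.

Lemma subring_pred1 : S 1.
Proof. by case: S_subring. Qed.

Lemma subring_predB x y : S x -> S y -> S (x - y).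
Proof. by case: S_subring => _ SB _; apply: SB. Qed.

Lemma subring_predM x y : S x -> S y -> S (x * y).
Proof. by case: S_subring => _ _ SM; apply: SM. Qed.

Lemma subring_pred0 : S 0.
Proof. by rewrite -(subrr 1); apply: subring_predB; apply: subring_pred1. Qed.

Lemma subring_predN x : S x -> S (- x).
Proof. by move=> Sx; rewrite -sub0r; apply: subring_predB => //; apply: subring_pred0. Qed.

Lemma subring_predD x y : S x -> S y -> S (x + y).
Proof. by move=> Sx Sy; rewrite -[y]opprK; apply/subring_predB/subring_predN. Qed.

Lemma subring_pred_int (z : int) : S z%:~R.
Proof.
have S_nat n : S n%:R.
  elim: n => [|n IHn]; first exact: subring_pred0.
  by rewrite mulrS; apply: subring_predD => //; apply: subring_pred1.
case: z => n; first by rewrite -pmulrn; apply: S_nat.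
by rewrite NegzE mulrNz -pmulrn; apply/subring_predN/S_nat.
Qed.

Lemma subring_pred_zM (z : int) x : S x -> S (z%:~R * x).
Proof. by move=> Sx; apply/subring_predM/Sx/subring_pred_int. Qed.

Lemma subring_pred_sum (I : finType) (F : I -> R) : (forall i, S (F i)) -> S (\sum_i F i).
Proof. by move=> SF; apply: (big_ind S subring_pred0 subring_predD) => i _; apply: SF. Qed.

Lemma subring_pred_ext (S' : R -> Prop) : (forall x, S x <-> S' x) -> subring_pred S'.
Proof.
move=> SE; case: S_subring => S1 SB SM.
by split=> [|x y|x y]; rewrite -?SE; [|apply: SB|apply: SM].
Qed.

End SubringPredicates.

Lemma integral_subring (R : comNzRingType) : subring_pred (integralOver (intr : int -> R)).
Proof. by split=> [|x y|x y]; [apply: integral1 | apply: integral_sub | apply: integral_mul]. Qed.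

Section SubringOfSquarefreeIndex.
Variable R : comNzRingType.
Hypothesis int_torsionfree : forall (n : int) (x : R), n != 0 -> n%:~R * x = 0 -> x = 0.
Hypothesis R_reduced : forall x : R, x * x = 0 -> x = 0.

Variables Ok O : R -> Prop.
Hypotheses (Ok_subring : subring_pred Ok) (O_subring : subring_pred O).
Hypothesis O_sub_Ok : forall x, O x -> Ok x.
Hypothesis Ok_rat_int :
  forall (d m : int) (y : R), Ok y -> d != 0 -> d%:~R * y = m%:~R -> (d %| m)%Z.
Variables b1 b2 b3 : R.
Hypothesis O_basis : zbasis O b1 b2 b3.
Variables (f : nat) (rep : 'I_f -> R).
Hypothesis rep_Ok : forall i, Ok (rep i).
Hypothesis rep_classes : forall x, Ok x -> exists! i, O (x - rep i).
Hypothesis f_gt0 : (0 < f)%N.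
Hypothesis f_squarefree : forall p, prime p -> ~~ (p * p %| f)%N.

Local Notation fz := (f%:Z).

Lemma natr_index : f%:R = fz%:~R :> R. Proof. by rewrite -pmulrn. Qed.

Lemma index_neq0 : fz != 0. Proof. by rewrite -lt0n. Qed.

Lemma rep_inj i j : O (rep i - rep j) -> i = j.
Proof.
move=> Oij; have [l [_ uniq_l]] := rep_classes (rep_Ok i).
have O_ii : O (rep i - rep i) by rewrite subrr; apply: subring_pred0.
by rewrite -(uniq_l i O_ii) (uniq_l j Oij).
Qed.

(* Translation by x permutes the classes, and summing over them leaves f * x. *)
Lemma O_index_mul x : Ok x -> O (f%:R * x).
Proof.
move=> Ok_x; have /fin_all_exists [s Os] : forall i, exists j, O (rep i + x - rep j).
  by move=> i; have [j [Oj _]] := rep_classes (subring_predD Ok_subring (rep_Ok i) Ok_x); exists j.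
have s_inj : injective s.
  move=> i i' eq_s; apply: rep_inj.
  have -> : rep i - rep i' = (rep i + x - rep (s i)) - (rep i' + x - rep (s i')).
    by rewrite eq_s; ring.
  exact: subring_predB.
have := subring_pred_sum O_subring Os; rewrite sumrB big_split /=.
have -> : \sum_i rep (s i) = \sum_i rep i by rewrite [RHS](reindex_inj s_inj).
by rewrite addrAC subrr add0r sumr_const card_ord mulr_natl.
Qed.

Definition quotient_generator (w0 : R) : Prop :=
  [/\ Ok w0, forall x, Ok x -> exists j : int, O (x - j%:~R * w0)
    & forall j : int, O (j%:~R * w0) -> (fz %| j)%Z].

Lemma O_sub_coordsE (f_gt1 : (1 < f)%N) x y a b c a' b' c' :
  f%:R * x = zcomb b1 b2 b3 a b c -> f%:R * y = zcomb b1 b2 b3 a' b' c' ->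
  O (x - y) <-> zmod_row3 f a b c = zmod_row3 f a' b' c'.
Proof.
move=> fxE fyE; rewrite zmod_row3_eq //; split.
  move=> /(proj1 O_basis) [e1 [e2 [e3 xyE]]].
  have [-> -> ->] : [/\ a = fz * e1 + a', b = fz * e2 + b' & c = fz * e3 + c'].
    apply: zcomb_inj (proj2 O_basis) _.
    by rewrite -fxE -[x](subrK y) mulrDr xyE fyE /zcomb; ring.
  by split; rewrite addrK dvdz_mulr.
case=> /dvdzP[e1 ea] /dvdzP[e2 eb] /dvdzP[e3 ec]; apply/(proj1 O_basis).
exists e1, e2, e3; apply/eqP; rewrite -subr_eq0; apply/eqP.
apply: (int_torsionfree index_neq0); rewrite -natr_index mulrBr mulrBr fxE fyE.
by rewrite -(subrK a' a) -(subrK b' b) -(subrK c' c) ea eb ec /zcomb; ring.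
Qed.

Section QuotientGenerator.
Hypothesis f_gt1 : (1 < f)%N.
Variables ca cb cc : 'I_f -> int.
Hypothesis rep_coords : forall i, f%:R * rep i = zcomb b1 b2 b3 (ca i) (cb i) (cc i).

Let row i := zmod_row3 f (ca i) (cb i) (cc i).
Let classes := [set row i | i : 'I_f].

Lemma index_mul0E : f%:R * 0 = zcomb b1 b2 b3 0 0 0 :> R.
Proof. by rewrite /zcomb; ring. Qed.

Lemma classes_group_set : group_set classes.
Proof.
apply/group_setP; split.
  have [i0 [O_i0 _]] := rep_classes (subring_pred0 Ok_subring).
  apply/imsetP; exists i0 => //; rewrite zmod1gE -zmod_row30.
  exact/(O_sub_coordsE f_gt1 index_mul0E (rep_coords i0)).
move=> _ _ /imsetP[i _ ->] /imsetP[j _ ->]; rewrite zmodMgE zmod_row3D.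
have [l [O_l _]] := rep_classes (subring_predD Ok_subring (rep_Ok i) (rep_Ok j)).
have fijE : f%:R * (rep i + rep j) = zcomb b1 b2 b3 (ca i + ca j) (cb i + cb j) (cc i + cc j).
  by rewrite mulrDr !rep_coords /zcomb; ring.
by apply/imsetP; exists l => //; apply/(O_sub_coordsE f_gt1 fijE (rep_coords l)).
Qed.

Lemma card_classes : #|classes| = f.
Proof.
rewrite card_imset ?card_ord // => i j /(O_sub_coordsE f_gt1 (rep_coords i) (rep_coords j)).
exact: rep_inj.
Qed.

Lemma exists_quotient_generator_gt1 : exists w0, quotient_generator w0.
Proof.
have /cyclicP[h classesE] : cyclic (group classes_group_set).
  apply: abelian_squarefree_cyclic; first exact: zmod_abelian.
  by move=> p p_pr; rewrite card_classes f_squarefree.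
have /imsetP[l _ hE] : h \in group classes_group_set by rewrite classesE cycle_id.
have order_h : #[h]%g = f by rewrite orderE -classesE card_classes.
have coords_mul (m : nat) :
    f%:R * ((m%:Z)%:~R * rep l) = zcomb b1 b2 b3 (ca l * m) (cb l * m) (cc l * m).
  by rewrite mulrCA rep_coords /zcomb; ring.
exists (rep l); split=> [||j O_j]; first exact: rep_Ok.
  move=> x Ok_x; have [i [O_i _]] := rep_classes Ok_x.
  have : row i \in <[h]>%g by rewrite -classesE; apply: imset_f.
  case/cycleP=> m; rewrite zmodXgE hE zmod_row3Mn => row_iE.
  have O_im := (O_sub_coordsE f_gt1 (rep_coords i) (coords_mul m)).2 row_iE; exists m.
  by rewrite -[x](subrK (rep i)) -addrA; apply: subring_predD.
have dvd_nat (m : nat) : O ((m%:Z)%:~R * rep l) -> (f %| m)%N.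
  move=> O_m; have /(O_sub_coordsE f_gt1 (coords_mul m) index_mul0E) : O (m%:~R * rep l - 0).
    by rewrite subr0.
  rewrite -zmod_row3Mn zmod_row30 -[zmod_row3 f _ _ _]/(row l) -hE -zmodXgE => /eqP.
  by rewrite -order_dvdn order_h.
rewrite dvdzE; apply: dvd_nat; case: j O_j => m //.
by rewrite NegzE mulrNz mulNr => /(subring_predN O_subring); rewrite opprK.
Qed.

End QuotientGenerator.

Lemma exists_quotient_generator : exists w0, quotient_generator w0.
Proof.
have [f_le1|f_gt1] := leqP f 1.
  have f1 : f = 1%N by apply/eqP; rewrite eqn_leq f_le1 f_gt0.
  exists 0; split=> [||j _]; first exact: subring_pred0.
    by move=> x /O_index_mul; rewrite f1 mulr1n mul1r => O_x; exists 0; rewrite mulr0 subr0.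
  by rewrite f1 dvd1z.
have /fin_all_exists[c rep_coords] : forall i, exists c : int * int * int,
    f%:R * rep i = zcomb b1 b2 b3 c.1.1 c.1.2 c.2.
  by move=> i; have /(proj1 O_basis)[a [b [d E]]] := O_index_mul (rep_Ok i); exists (a, b, d).
exact: (exists_quotient_generator_gt1 (ca := fun i => (c i).1.1) (cb := fun i => (c i).1.2)
  (cc := fun i => (c i).2) f_gt1 rep_coords).
Qed.

Lemma O_basis1 : exists u v, zbasis O 1 u v.
Proof.
have /(proj1 O_basis)[a [b [c oneE]]] := subring_pred1 O_subring.
have [d [y [v [w [yE B]]]]] := zbasis_content a b c O_basis.
have dy1 : d%:~R * y = 1%:~R by rewrite -yE -oneE.
have d_neq0 : d != 0 by apply: contra_eq_neq dy1 => ->; rewrite mul0r eq_sym oner_neq0.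
have [O_y _ _] := zbasis_mem B.
have [e ed1] := dvdzP (Ok_rat_int (O_sub_Ok O_y) d_neq0 dy1).
exists (e%:~R * v), w.
by apply: (zbasis_unimodular (p := d) (q := 0) (r := 0) (s := e) _ _ _ B);
  rewrite ?mul0r ?add0r ?addr0 ?subr0 // ?dy1 // mulrC.
Qed.

Lemma generator_coprime (w0 u : R) (c0 g : int) : quotient_generator w0 -> O u ->
  f%:R * w0 = c0%:~R + g%:~R * u -> coprimez g fz.
Proof.
move=> [Ok_w0 _ w0_order] O_u fw0E.
have [e [g1 [f1 [x1 [x2 [gE fE bezout]]]]]] := int_gcd_cofactors g fz.
have e_neq0 : e != 0 by apply: contra_neq index_neq0; rewrite fE => ->; rewrite mul0r.
pose y := f1%:~R * w0 - g1%:~R * u.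
have Ok_y : Ok y.
  by apply: (subring_predB Ok_subring); apply: (subring_pred_zM Ok_subring) => //; apply: O_sub_Ok.
have eyE : e%:~R * y = c0%:~R.
  by rewrite -[RHS](addrK (g%:~R * u)) -fw0E natr_index fE gE /y; ring.
have [c c0E] := dvdzP (Ok_rat_int Ok_y e_neq0 eyE).
have yE : y = c%:~R.
  apply/eqP; rewrite -subr_eq0; apply/eqP; apply: (int_torsionfree e_neq0).
  by rewrite mulrBr eyE c0E; ring.
have [t f1E] : exists t, f1 = t * fz.
  apply/dvdzP; apply: w0_order.
  rewrite (_ : _ * w0 = y + g1%:~R * u); last by rewrite /y; ring.
  rewrite yE.
  by apply: (subring_predD O_subring); [apply: subring_pred_int | apply: subring_pred_zM].
have et1 : e * t = 1.
  by apply: (mulIf index_neq0); rewrite mul1r {2}fE f1E; ring.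
apply/coprimezP; exists (x1 * t, x2 * t) => /=.
by rewrite -bezout gE fE -[x1 * g1]mulr1 -[x2 * f1]mulr1 -et1; ring.
Qed.

Lemma index_basis : exists a c, zbasis Ok 1 a c /\ zbasis O 1 (f%:R * a) c.
Proof.
have [u [v B]] := O_basis1.
have [w0 w0_gen] := exists_quotient_generator; have [Ok_w0 w0_span _] := w0_gen.
have /(proj1 B)[c0 [c1 [c2 fw0E]]] := O_index_mul Ok_w0.
have [g [u' [v' [uvE B']]]] := zbasis_content2 c1 c2 B.
have {}fw0E : f%:R * w0 = c0%:~R + g%:~R * u' by rewrite fw0E -uvE /zcomb; ring.
have [_ O_u' _] := zbasis_mem B'.
have /coprimezP[[j q] /= bezout] := generator_coprime w0_gen O_u' fw0E.
pose a := j%:~R * w0 + q%:~R * u'.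
have bezoutR : j%:~R * g%:~R + q%:~R * fz%:~R = 1 :> R.
  by rewrite -!rmorphM -rmorphD /= bezout.
have faE : f%:R * a = u' + (j * c0)%:~R * 1.
  transitivity ((j%:~R * g%:~R + q%:~R * fz%:~R) * u' + (j * c0)%:~R * 1).
    by rewrite mulrDr mulrCA fw0E; ring.
  by rewrite bezoutR mul1r.
have BO : zbasis O 1 (f%:R * a) v' := zbasis_shear faE B'.
have Ok_a : Ok a.
  by apply: (subring_predD Ok_subring); apply: (subring_pred_zM Ok_subring) => //; apply: O_sub_Ok.
(* [w0 - g a] lies in O because [j g = 1 - q f] and [f w0] lies in O. *)
have O_w0ga : O (w0 - g%:~R * a).
  rewrite (_ : _ - _ = q%:~R * (f%:R * w0) - (q * g)%:~R * u').
    by apply: (subring_predB O_subring); apply: subring_pred_zM => //; apply: O_index_mul.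
  transitivity ((j%:~R * g%:~R + q%:~R * fz%:~R) * w0 - g%:~R * a); first by rewrite bezoutR mul1r.
  by rewrite /a; ring.
exists a, v'; split=> //; rewrite natr_index in BO.
apply: zbasis_index index_neq0 _ BO => x; split=> [Ok_x | [J O_xJ]].
  have [J O_xJ] := w0_span x Ok_x; exists (J * g).
  rewrite (_ : _ - _ = (x - J%:~R * w0) + J%:~R * (w0 - g%:~R * a)); last by ring.
  by apply: (subring_predD O_subring) => //; apply: subring_pred_zM.
rewrite -[x](subrK (J%:~R * a)); apply: (subring_predD Ok_subring); first exact: O_sub_Ok.
exact: subring_pred_zM.
Qed.

Definition adapted (w t : R) : Prop := zbasis Ok 1 w t /\ zbasis O 1 (f%:R * w) t.

Lemma adapted_affine w t w' t' (p q r s a b : int) : p * s - q * (r * fz) = 1 ->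
  w' = zcomb 1 w t a p q -> t' = zcomb 1 w t b (r * fz) s ->
  adapted w t -> adapted w' t'.
Proof.
move=> det1 w'E t'E [Bk BO]; split.
  exact: zbasis1_affine det1 w'E t'E Bk.
apply: (zbasis1_affine (p := p) (q := q * fz) (r := r) (s := s) (a := a * fz) (b := b) _ _ _ BO).
- by rewrite -det1; ring.
- by rewrite w'E /zcomb; ring.
- by rewrite t'E /zcomb; ring.
Qed.

Lemma exists_normalized_adapted : exists w t (n : int), adapted w t /\ w * t = n%:~R.
Proof.
have [a [c [Bk BO]]] := index_basis.
have [_ Ok_a Ok_c] := zbasis_mem Bk.
have /(proj1 Bk)[n0 [n1 [n2 acE]]] := subring_predM Ok_subring Ok_a Ok_c.
exists (a - n2%:~R), (c - n1%:~R), (n0 + n1 * n2); split.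
  apply: (adapted_affine (p := 1) (q := 0) (r := 0) (s := 1) (a := - n2) (b := - n1)) (conj Bk BO).
  - by rewrite mul0r subr0 mulr1.
  - by rewrite /zcomb; ring.
  - by rewrite /zcomb; ring.
transitivity (a * c - n1%:~R * a - n2%:~R * c + (n1 * n2)%:~R); first by ring.
by rewrite acE /zcomb; ring.
Qed.

Lemma adapted_unit_step w t (n g0 g1 g2 : int) : adapted w t -> w * t = n%:~R ->
  t * t = zcomb 1 w t g0 g1 g2 -> g1 != 0 ->
  exists w' t' (n' : int), [/\ adapted w' t', w' * t' = n'%:~R & n' != 0].
Proof.
move=> [Bk BO] wtE ttE g1_neq0; have [_ Ok_w _] := zbasis_mem Bk.
have /(proj1 Bk)[e0 [e1 [e2 wwE]]] := subring_predM Ok_subring Ok_w Ok_w.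
have [nE e0E g0E] := normalized_mul_table wwE ttE wtE (proj2 Bk).
have [s _ Ps] : exists2 s : int, s != 0 &
    e2 + s * (- e1) + s * s * g2 + s * s * s * (- g1) != 0.
  by apply: exists_nonroot_cubic => -[_ _ _ /eqP]; rewrite oppr_eq0 (negPf g1_neq0).
exists (zcomb 1 w t (s * s * g1 - s * g2) 1 s), (zcomb 1 w t (- (s * g1)) 0 1).
exists (g1 * (e2 + s * (- e1) + s * s * g2 + s * s * s * (- g1))); split.
- apply: (adapted_affine (p := 1) (q := s) (r := 0) (s := 1) _ erefl erefl (conj Bk BO)).
  by rewrite !mul0r mulr0 subr0 mulr1.
- rewrite (normalized_zcombM wwE ttE wtE) /zcomb.
  by rewrite nE e0E g0E; ring.
- by rewrite mulf_neq0.
Qed.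

Lemma adapted_nondegenerate w t (n g0 g2 : int) : adapted w t -> w * t = n%:~R ->
  t * t = zcomb 1 w t g0 0 g2 ->
  exists w' t' (n' c0 c1 c2 : int), [/\ adapted w' t', w' * t' = n'%:~R,
    t' * t' = zcomb 1 w' t' c0 c1 c2 & c1 != 0].
Proof.
move=> [Bk BO] wtE ttE; have [_ Ok_w _] := zbasis_mem Bk.
have /(proj1 Bk)[e0 [e1 [e2 wwE]]] := subring_predM Ok_subring Ok_w Ok_w.
have [nE e0E _] := normalized_mul_table wwE ttE wtE (proj2 Bk).
have [s s_neq0 Ps] : exists2 s : int, s != 0 &
    - g2 + s * (fz * e1) + s * s * (- (fz * fz * e2)) + s * s * s * 0 != 0.
  apply: exists_nonroot_cubic => -[/eqP g2_0 /eqP fe1_0 /eqP fe2_0 _].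
  move: g2_0 fe1_0 fe2_0; rewrite !oppr_eq0 !mulf_eq0 (negPf index_neq0) /=.
  move=> /eqP g2_0 /eqP e1_0 /eqP e2_0.
  have w0 : w = 0 by apply: R_reduced; rewrite wwE e0E g2_0 e1_0 e2_0 /zcomb; ring.
  have w_comb0 : zcomb 1 w t 0 1 0 = 0 by rewrite /zcomb w0; ring.
  by have [_ /eqP] := proj2 Bk 0 1 0 w_comb0; rewrite oner_eq0.
(* Shear [t] by [f s w] and renormalize: the [w']-coordinate of [t' * t'] becomes
   [f s] times the polynomial above, which reducedness keeps from vanishing identically. *)
pose v := - (fz * s * e2); pose u := fz * fz * s * s * e2 - fz * s * e1.
pose Z0 := u * u + fz * s * (fz * s) * e0 + (fz * s * 1 + 1 * (fz * s)) * n + 1 * 1 * g0.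
pose Z1 := u * (fz * s) + fz * s * u + fz * s * (fz * s) * e1 + 1 * 1 * 0.
pose Z2 := u * 1 + 1 * u + fz * s * (fz * s) * e2 + 1 * 1 * g2.
have ttE' := normalized_zcombM wwE ttE wtE u (fz * s) 1 u (fz * s) 1.
rewrite -/Z0 -/Z1 -/Z2 in ttE'.
exists (zcomb 1 w t v 1 0), (zcomb 1 w t u (fz * s) 1), (v * u + fz * s * e0 + n).
exists (Z0 - Z1 * v + Z2 * (fz * s * v - u)), (Z1 - fz * s * Z2), Z2; split.
- apply: (adapted_affine (p := 1) (q := 0) (r := s) (s := 1) _ erefl _ (conj Bk BO)).
    by rewrite mul0r subr0 mulr1.
  by rewrite [s * fz]mulrC.
- rewrite (normalized_zcombM wwE ttE wtE) /zcomb nE.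
  by rewrite /u /v; ring.
- by rewrite ttE' /zcomb; ring.
have -> : Z1 - fz * s * Z2 = fz * s * (- g2 + s * (fz * e1) + s * s * (- (fz * fz * e2))).
  by rewrite /Z1 /Z2 /u; ring.
by rewrite mulr0 addr0 in Ps; rewrite !mulf_neq0 ?index_neq0.
Qed.

Lemma exists_adapted_unit : exists w t (n : int), [/\ adapted w t, w * t = n%:~R & n != 0].
Proof.
have [w [t [n [adp wtE]]]] := exists_normalized_adapted.
have [_ _ Ok_t] := zbasis_mem (proj1 adp).
have /(proj1 (proj1 adp))[g0 [g1 [g2 ttE]]] := subring_predM Ok_subring Ok_t Ok_t.
have [g1_0|] := eqVneq g1 0; last exact: adapted_unit_step adp wtE ttE.
rewrite g1_0 in ttE.
have [w' [t' [n' [c0 [c1 [c2 [adp' wtE' ttE' c1_neq0]]]]]]] := adapted_nondegenerate adp wtE ttE.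
exact: adapted_unit_step adp' wtE' ttE' c1_neq0.
Qed.

Section Conductor.
Variables (w t : R) (n : int).
Hypotheses (w_t_adapted : adapted w t) (wtE : w * t = n%:~R).

Local Notation C := (zspan f%:R (f%:R * w) t).

Lemma conductorE x : C x <-> exists a b c, x = zcomb 1 w t (a * fz) (b * fz) c.
Proof. by split=> -[a [b [c ->]]]; exists a, b, c; rewrite /zcomb; ring. Qed.

Lemma conductor_sub_O x : C x -> O x.
Proof.
case/conductorE=> a [b [c ->]]; apply/(proj1 (proj2 w_t_adapted)).
by exists (a * fz), b, c; rewrite /zcomb; ring.
Qed.

Lemma conductor_ideal : ideal_in Ok C.
Proof.
have [Bk BO] := w_t_adapted; have [Ok1 Ok_w Ok_t] := zbasis_mem Bk.
have /(proj1 Bk)[e0 [e1 [e2 wwE]]] := subring_predM Ok_subring Ok_w Ok_w.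
have /(proj1 Bk)[g0 [g1 [g2 ttE]]] := subring_predM Ok_subring Ok_t Ok_t.
have [nE e0E g0E] := normalized_mul_table wwE ttE wtE (proj2 Bk).
have [q g1E] : exists q, g1 = q * fz.
  have [_ _ O_t] := zbasis_mem BO.
  have /(proj1 BO)[a [b [c ttE']]] := subring_predM O_subring O_t O_t.
  have [_ -> _] : [/\ g0 = a, g1 = b * fz & g2 = c].
    by apply: zcomb_inj (proj2 Bk) _; rewrite -ttE ttE' /zcomb; ring.
  by exists b.
split.
- move=> x /conductorE[a [b [c ->]]]; apply: (subring_predD Ok_subring);
    first apply: (subring_predD Ok_subring); exact: subring_pred_zM.
- by apply/conductorE; exists 0, 0, 0; rewrite /zcomb; ring.
- move=> x y /conductorE[a [b [c ->]]] /conductorE[a' [b' [c' ->]]]; apply/conductorE.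
  by exists (a - a'), (b - b'), (c - c'); rewrite zcombB; congr zcomb; ring.
move=> r x /(proj1 Bk)[a [b [c ->]]] /conductorE[a' [b' [c' ->]]]; apply/conductorE.
rewrite (normalized_zcombM wwE ttE wtE).
exists (a * a' + b * b' * e0 + b * c' * e2 * q + c * b' * n - c * c' * q * e1).
exists (a * b' + b * a' + b * b' * e1 + c * c' * q).
exists (a * c' + c * (a' * fz) + b * (b' * fz) * e2 + c * c' * g2).
by congr zcomb; rewrite ?nE ?g0E ?g1E; ring.
Qed.

Lemma conductor_max I : ideal_in Ok I -> (forall x, I x -> O x) -> forall x, I x -> C x.
Proof.
have [Bk BO] := w_t_adapted; have [_ Ok_w _] := zbasis_mem Bk.
have /(proj1 Bk)[e0 [e1 [e2 wwE]]] := subring_predM Ok_subring Ok_w Ok_w.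
move=> [_ _ _ I_mul] I_O x Ix.
have /(proj1 BO)[a [b [c xE]]] := I_O x Ix.
have /(proj1 BO)[a' [b' [c' wxE]]] := I_O _ (I_mul _ _ Ok_w Ix).
have [_ abE _] : [/\ a' = b * fz * e0 + c * n, b' * fz = a + b * fz * e1 & c' = b * fz * e2].
  apply: zcomb_inj (proj2 Bk) _; transitivity (w * x).
    by rewrite wxE /zcomb; ring.
  transitivity (a%:~R * w + (b * fz)%:~R * (w * w) + c%:~R * (w * t)).
    by rewrite xE /zcomb; ring.
  by rewrite wwE wtE /zcomb; ring.
have aE : a = (b' - b * e1) * fz by rewrite mulrBl abE; ring.
by apply/conductorE; exists (b' - b * e1), b, c; rewrite xE aE /zcomb; ring.
Qed.

Lemma adapted_conductor : conductor_in Ok O C.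
Proof. by split; [apply: conductor_ideal | apply: conductor_sub_O | apply: conductor_max]. Qed.

End Conductor.

Theorem exists_adapted_unit_basis : exists w t (n : int),
  [/\ zbasis Ok 1 w t, w * t = n%:~R, n != 0, (forall x, O x <-> zspan 1 (f%:R * w) t x)
    & conductor_in Ok O (zspan f%:R (f%:R * w) t)].
Proof.
have [w [t [n [[Bk BO] wtE n_neq0]]]] := exists_adapted_unit.
by exists w, t, n; split=> //; [apply: (proj1 BO) | apply: (adapted_conductor (conj Bk BO) wtE)].
Qed.

End SubringOfSquarefreeIndex.

Section RationalAlgebras.
Variable A : lalgType rat.

Lemma lalg_int_torsionfree (n : int) (x : A) : n != 0 -> n%:~R * x = 0 -> x = 0.
Proof.
move=> n_neq0 /eqP; rewrite mulrzl -scaler_int scaler_eq0 intr_eq0 (negPf n_neq0).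
by move/eqP.
Qed.

Lemma lalg_integral_rat_int (d m : int) (y : A) : integralOver (intr : int -> A) y ->
  d != 0 -> d%:~R * y = m%:~R -> (d %| m)%Z.
Proof.
move=> [p mon_p root_p] d_neq0 dyE.
have dQ_neq0 : (d%:~R : rat) != 0 by rewrite intr_eq0.
have yE : y = (m%:~R / d%:~R : rat)%:A.
  apply/eqP; rewrite -subr_eq0; apply/eqP; apply: (lalg_int_torsionfree d_neq0).
  rewrite mulrBr dyE -[d%:~R : A](rmorph_int (in_alg A)) /= mulr_algl scalerA mulrC divfK //.
  by rewrite -in_algE rmorph_int subrr.
have /rat_integral_int/intrP[z qE] : integralOver (intr : int -> rat) (m%:~R / d%:~R).
  exists p => //; move: root_p.
  rewrite yE -in_algE -(eq_map_poly (rmorph_int (in_alg A))) map_poly_comp.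
  by rewrite fmorph_root.
apply/dvdzP; exists z; apply: (intr_inj (R := rat)).
by rewrite intrM -qE divfK.
Qed.

End RationalAlgebras.

Lemma unit_of_mul_int (A : unitAlgType rat) (w t : A) (n : int) :
  w * t = n%:~R -> t * w = n%:~R -> n != 0 -> w \is a GRing.unit.
Proof.
move=> wtE twE n_neq0; have nQ_neq0 : (n%:~R : rat) != 0 by rewrite intr_eq0.
have inv_n : (n%:~R : rat)^-1 *: (n%:~R : A) = 1.
  by rewrite -(rmorph_int (in_alg A)) /= scalerA mulVf ?scale1r.
apply/unitrP; exists (t * ((n%:~R : rat)^-1)%:A).
by rewrite !mulr_algr -scalerAl -scalerAr twE wtE inv_n.
Qed.

Lemma maximal_orderE (k : falgType rat) (x : k) :
  maximal_order x <-> integralOver (intr : int -> k) x.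
Proof. by split=> [[p [mon_p /rootP]] | [p mon_p /rootP]]; exists p. Qed.

Section CommutativeRationalAlgebra.
Variables (k : falgType rat) (kC : commutative (@GRing.mul k)).

(* A copy of [k] indexed by the commutativity proof, so that the commutative ring
   structure built from [kC] is found by unification. *)
Definition comm_falg of commutative (@GRing.mul k) : Type := k.
HB.instance Definition _ := GRing.NzRing.on (comm_falg kC).
HB.instance Definition _ := GRing.PzSemiRing_hasCommutativeMul.Build (comm_falg kC) kC.

Lemma maximal_order_subring : subring_pred (@maximal_order k : comm_falg kC -> Prop).
Proof.
by apply: (subring_pred_ext (integral_subring (comm_falg kC))) => x; rewrite maximal_orderE.
Qed.

End CommutativeRationalAlgebra.

Theorem proposition2p5 (k : falgType rat) (O : k -> Prop) (f : nat) :
  @etale_cubic k ->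
  cubic_ring O ->
  subset_k O (@maximal_order k) ->
  index_is (@maximal_order k) O f ->
  squarefree f ->
  exists w t : k,
    [/\ normalized_basis (@maximal_order k) w t,
        w \is a GRing.unit, t \is a GRing.unit,
        eq_kset O (zspan3 1 (f%:R * w) t)
      & is_conductor (@maximal_order k) O (zspan3 f%:R (f%:R * w) t)].
Proof.
move=> [kC _ k_reduced] [O1 OB OM [b1 [b2 [b3 O_basis]]]] O_Ok [rep [rep_Ok rep_classes]].
move=> [f_gt0 f_sqf].
have [||w [t [n [Bk wtE n_neq0 OE Cw]]]] := @exists_adapted_unit_basis (comm_falg kC)
    (@lalg_int_torsionfree k) _ (@maximal_order k) O (maximal_order_subring kC)
    (And3 O1 OB OM) O_Ok _ b1 b2 b3 O_basis f rep rep_Ok rep_classes f_gt0 f_sqf.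
- by move=> x xx0; apply: (k_reduced x 2); rewrite expr2.
- by move=> d m y /maximal_orderE; apply: lalg_integral_rat_int.
exists w, t; split=> //; first by split=> //; exists n.
  by apply: (unit_of_mul_int wtE) => //; rewrite kC.
by apply: (unit_of_mul_int (t := w) (n := n)) => //; rewrite kC.
Qed.
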